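(* Let $\mathcal D$ be a non-trivial $2$-$(k^{2},k,\lambda)$ design with $\lambda\mid k$, admitting a flag-transitive automorphism group $G$. Then: (1) $G$ acts primitively on the point set; (2) for every point $x$, $G_x$ is a large subgroup of $G$; (3) for every point $y\ne x$ and every block $B$ containing $x$, $|y^{G_x}|=(k+1)\,|B\cap y^{G_x}|$; in particular $k+1$ divides the length of every $G_x$-orbit on points other than $\{x\}$.
   Context: A $2$-$(v,k,\lambda)$ design consists of $v$ points and a family of $k$-subsets (blocks) such that each pair of distinct points lies in exactly $\lambda$ blocks; non-trivial means $2<k<v$. $G\le\mathrm{Aut}(\mathcal D)$ is flag-transitive if transitive on pairs $(x,B)$ with $x\in B$. $G_x$ is the point stabilizer, $y^{G_x}$ the $G_x$-orbit of $y$. A subgroup $H$ of a finite group $K$ is large if $|K|<|H|^3$. *)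

From mathcomp Require Import all_boot all_fingroup all_solvable.
Set Implicit Arguments. Unset Strict Implicit. Unset Printing Implicit Defensive.

Definition is_2design (T : finType) (blocks : {set {set T}}) (v k lambda : nat) :=
  [/\ #|T| = v,
      forall B, B \in blocks -> #|B| = k &
      forall x y : T, x != y ->
        #|[set B in blocks | (x \in B) && (y \in B)]| = lambda].

Definition nontrivial_design (T : finType) (k : nat) := 2 < k < #|T|.

Definition design_aut (T : finType) (blocks : {set {set T}}) (G : {group {perm T}}) :=
  forall g, g \in G -> forall B, B \in blocks -> (g @: B) \in blocks.

Definition flag (T : finType) (blocks : {set {set T}}) (x : T) (B : {set T}) :=
  (B \in blocks) && (x \in B).

Definition flag_transitive (T : finType) (blocks : {set {set T}}) (G : {group {perm T}}) :=
  forall x B y C, flag blocks x B -> flag blocks y C ->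
    exists2 g, g \in G & (g x = y /\ g @: B = C).

Definition large (gT : finGroupType) (H K : {set gT}) := #|K| < #|H| ^ 3.

From mathcomp Require Import all_boot all_fingroup all_solvable.
From mathcomp Require Import zify.

Set Implicit Arguments.
Unset Strict Implicit.
Unset Printing Implicit Defensive.

(* The blocks through a point x are permuted transitively by the stabiliser
   G_x, so for a G_x-orbit Y not containing x every such block meets Y in the
   same number of points.  Counting pairs (y, C) with y in Y and x, y in C then
   gives r |B ∩ Y| = λ |Y|, and for v = k^2 the replication number is
   r = λ(v - 1)/(k - 1) = λ(k + 1).  Hence k + 1 divides every non-trivial
   subdegree.  A block of imprimitivity of size a and index d, with da = k^2,
   is a union of {x} and G_x-orbits, as is its complement, so k + 1 divides
   both a - 1 and k^2 - a; this forces a = 1 or d = 1.  Finally G_x is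
   transitive on the r blocks through x, so |G_x| >= r > k and
   |G| = k^2 |G_x| < |G_x|^3. *)

Lemma dvdn_card_acts (T : finType) (A : {group {perm T}}) (S : {set T}) m :
  [acts A, on S | 'P] -> (forall y, y \in S -> m %| #|orbit 'P A y|) ->
  m %| #|S|.
Proof.
move=> actS dvd_orb; rewrite -(acts_sum_card_orbit actS).
by apply: dvdn_sum => _ /imsetP[y Sy ->]; apply: dvd_orb.
Qed.

Lemma orbit_astab1_notin (T : finType) (G : {group {perm T}}) x y :
  y != x -> x \notin orbit 'P ('C_G[x | 'P])%g y.
Proof.
move=> yx; rewrite orbit_sym; apply/negP => /orbitP[g /setIP[_ /astab1P gx] gy].
by move: gx; rewrite gy => /eqP; rewrite (negbTE yx).
Qed.

Section FlagTransitiveDesign.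

Variables (T : finType) (blocks : {set {set T}}) (v k lambda : nat).
Variable G : {group {perm T}}.
Hypothesis design : is_2design blocks v k lambda.
Hypothesis flag_tr : flag_transitive blocks G.

Definition blocks_through (x : T) := [set C in blocks | x \in C].

Lemma sum_card_blocks_through x (S : {set T}) : x \notin S ->
  \sum_(C in blocks_through x) #|C :&: S| = #|S| * lambda.
Proof.
move=> xS; case: design => _ _ pair_blocks.
rewrite (eq_bigl (fun C => (C \in blocks) && (x \in C))); last by move=> C; rewrite inE.
transitivity (\sum_(C | (C \in blocks) && (x \in C))
                \sum_(y | (y \in S) && (y \in C)) 1).
  apply: eq_bigr => C _; rewrite sum1dep_card.
  by apply: eq_card => y; rewrite !inE andbC.
rewrite (exchange_big_dep (fun y => y \in S)) /=; last by move=> C y _ /andP[].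
rewrite -sum_nat_const; apply: eq_bigr => y yS.
rewrite sum1dep_card -(pair_blocks x y); last by apply: contraNneq xS => ->.
by apply: eq_card => C; rewrite !inE yS /= andbA.
Qed.

Lemma card_blocks_through x : k.-1 * #|blocks_through x| = #|T|.-1 * lambda.
Proof.
case: design => _ card_block _.
have xS : x \notin [set~ x] by rewrite !inE eqxx.
rewrite mulnC -(cardsC1 x) -(sum_card_blocks_through xS) -sum_nat_const.
apply: eq_bigr => C; rewrite inE => /andP[blkC xC].
by move: (cardsD1 x C); rewrite xC (card_block C blkC) setDE; lia.
Qed.

Lemma astab1_trans_blocks_through x B C :
  B \in blocks_through x -> C \in blocks_through x ->
  exists2 g, g \in ('C_G[x | 'P])%g & g @: B = C.
Proof.
rewrite !inE => /andP[blkB xB] /andP[blkC xC].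
have [g Gg [gx gB]] := flag_tr (y := x) (C := C) (introT andP (conj blkB xB))
  (introT andP (conj blkC xC)).
by exists g; rewrite // inE Gg; apply/astab1P; rewrite /= apermE gx.
Qed.

Lemma card_blocks_through_le_astab1 x :
  #|blocks_through x| <= #|('C_G[x | 'P])%g|.
Proof.
have [-> | [B xB]] := set_0Vmem (blocks_through x); first by rewrite cards0.
apply: leq_trans (leq_imset_card (fun g : {perm T} => g @: B) _).
apply: subset_leq_card; apply/subsetP => C xC.
by have [g Gx_g <-] := astab1_trans_blocks_through xB xC; apply: imset_f.
Qed.

Lemma card_blocks_through_meet_suborbit x y B :
  y != x -> B \in blocks_through x ->
  #|blocks_through x| * #|B :&: orbit 'P ('C_G[x | 'P])%g y|
    = #|orbit 'P ('C_G[x | 'P])%g y| * lambda.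
Proof.
move=> yx xB; set Y := orbit 'P _ y.
have meet_le C D : C \in blocks_through x -> D \in blocks_through x ->
    #|C :&: Y| <= #|D :&: Y|.
  move=> xC xD; have [g Gx_g <-] := astab1_trans_blocks_through xC xD.
  rewrite -(card_imset _ (@perm_inj _ g)); apply: subset_leq_card.
  apply/subsetP => _ /imsetP[z /setIP[zC zY] ->].
  by rewrite inE imset_f //= -apermE orbit_actr.
rewrite -(sum_card_blocks_through (orbit_astab1_notin G yx)) -sum_nat_const.
by apply: eq_bigr => C xC; apply/eqP; rewrite eqn_leq !meet_le.
Qed.

Lemma atrans_flag_transitive : 0 < lambda -> 0 < #|T| ->
  [transitive G, on [set: T] | 'P].
Proof.
case: design => _ _ pair_blocks lambda_gt0 /card_gt0P[x _].
apply/imsetP; exists x; rewrite ?inE //; apply/esym/setP => y; rewrite inE.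
have [<- | xy] := eqVneq x y; first exact: orbit_refl.
have /card_gt0P[C] : 0 < #|[set B in blocks | (x \in B) && (y \in B)]|.
  by rewrite pair_blocks.
rewrite !inE => /and3P[blkC xC yC].
have [g Gg [gx _]] := flag_tr (introT andP (conj blkC xC)) (introT andP (conj blkC yC)).
by apply/orbitP; exists g; rewrite // apermE.
Qed.

End FlagTransitiveDesign.

Lemma card_blocks_through_sq (T : finType) (blocks : {set {set T}}) k lambda x :
  is_2design blocks (k ^ 2) k lambda -> 1 < k ->
  #|blocks_through blocks x| = k.+1 * lambda.
Proof.
move=> design k_gt1; have [cardT _ _] := design.
have := card_blocks_through design x; rewrite cardT -!subn1 -{3}(exp1n 2).
by rewrite subn_sqr addn1 -mulnA => /eqP; rewrite eqn_pmul2l ?subn_gt0 // => /eqP.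
Qed.

Lemma sq_factor_trivial k a d : 0 < k -> d * a = k ^ 2 ->
  k.+1 %| a.-1 -> k.+1 %| k ^ 2 - a -> (a == 1) || (d == 1).
Proof.
case: a d => [|a] [|d] k_gt0 da_k2; rewrite ?muln0 ?mul0n in da_k2;
  try by move: k_gt0; rewrite -sqrn_gt0 -da_k2.
rewrite -da_k2 mulSn addKn mulnS addnC /= => dvd_a.
rewrite (dvdn_addr _ (dvdn_mull _ dvd_a)) => dvd_d.
apply/norP; rewrite !eqSS -!lt0n => -[a_gt0 d_gt0].
(* k^2 - a = (d - 1)(a - 1) + (d - 1), so k + 1 divides d - 1 as well and
   then da >= (k + 2)^2. *)
have := dvdn_leq a_gt0 dvd_a; have := dvdn_leq d_gt0 dvd_d.
move: da_k2; rewrite -mulnn => {dvd_a dvd_d}; nia.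
Qed.

Lemma primitive_of_suborbit_dvdn (T : finType) (G : {group {perm T}}) k :
  0 < k -> #|T| = k ^ 2 -> [transitive G, on [set: T] | 'P] ->
  (forall x y, y != x -> k.+1 %| #|orbit 'P ('C_G[x | 'P])%g y|) ->
  [primitive G, on [set: T] | 'P].
Proof.
move=> k_gt0 cardT trG dvd_suborbit.
have /card_gt0P[x _] : 0 < #|T| by rewrite cardT sqrn_gt0.
rewrite (trans_prim_astab (x := x)) ?inE //.
apply/maximal_eqP; split=> [|H sGxH sHG]; first exact: subsetIl.
set Gx := ('C_G[x | 'P])%G in sGxH *; set X := orbit 'P H x.
have index_Gx : #|G : Gx|%g = k ^ 2.
  by rewrite -card_orbit (atransP trG) ?inE // cardsT.
have card_X : #|X| = #|H : Gx|%g.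
  rewrite card_orbit; congr #|H : _|%g; apply/eqP.
  by rewrite eqEsubset setSI //= subsetI sGxH subsetIr.
have actsX : [acts Gx, on X | 'P].
  by apply: subset_trans sGxH (acts_orbit _ _ _); apply: subsetT.
have dvd_X1 : k.+1 %| #|X :\ x|.
  apply: (dvdn_card_acts (A := Gx)) => [|y].
    by apply: actsD actsX _; rewrite astabs_set1 subsetIr.
  by rewrite !inE => /andP[yx _]; apply: dvd_suborbit.
have dvd_CX : k.+1 %| #|~: X|.
  apply: (dvdn_card_acts (A := Gx)) => [|y]; first by rewrite /= astabsC.
  by rewrite inE => yX; apply: dvd_suborbit; apply: contraNneq yX => ->; apply: orbit_refl.
have dG_H_Gx := Lagrange_index sHG sGxH; rewrite index_Gx in dG_H_Gx.
have dvd_a : k.+1 %| #|H : Gx|%g.-1 by rewrite -card_X (cardsD1 x X) orbit_refl.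
have dvd_k2a : k.+1 %| k ^ 2 - #|H : Gx|%g.
  by rewrite -card_X -cardT -(cardsC X) addKn.
have /orP[/eqP index1 | /eqP index1] := sq_factor_trivial k_gt0 dG_H_Gx dvd_a dvd_k2a.
  by left; rewrite (index1g sGxH).
by right; apply: index1g.
Qed.

Lemma sq_mul_lt_cube k n : k < n -> k ^ 2 * n < n ^ 3.
Proof.
move=> k_lt_n; rewrite (expnSr n 2) ltn_pmul2r ?ltn_exp2r //.
exact: leq_ltn_trans k_lt_n.
Qed.

Theorem lemma3p2 (T : finType) (blocks : {set {set T}}) (k lambda : nat)
    (G : {group {perm T}}) :
  is_2design blocks (k ^ 2) k lambda ->
  nontrivial_design T k ->
  lambda %| k ->
  design_aut blocks G ->
  flag_transitive blocks G ->
  [/\ [primitive G, on [set: T] | 'P],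
      (forall x : T, large ('C_G[x | 'P])%g G),
      (forall x y : T, y != x -> forall B, B \in blocks -> x \in B ->
         #|orbit 'P ('C_G[x | 'P])%g y| = k.+1 * #|B :&: orbit 'P ('C_G[x | 'P])%g y|) &
      (forall x y : T, y != x -> k.+1 %| #|orbit 'P ('C_G[x | 'P])%g y|)].
Proof.
move=> design /andP[k_gt2 k_ltT] dvd_lambda_k _ flag_tr; have [cardT _ _] := design.
have k_gt1 : 1 < k by apply: ltnW.
have lambda_gt0 : 0 < lambda by apply: dvdn_gt0 dvd_lambda_k; apply: ltnW.
have card_blocks x := card_blocks_through_sq x design k_gt1.
have suborbit_meet x y : y != x -> forall B, B \in blocks -> x \in B ->
    #|orbit 'P ('C_G[x | 'P])%g y| = k.+1 * #|B :&: orbit 'P ('C_G[x | 'P])%g y|.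
  move=> yx B blkB xB; apply/eqP; rewrite -(eqn_pmul2r lambda_gt0) mulnAC -(card_blocks x).
  by rewrite (card_blocks_through_meet_suborbit design flag_tr yx) ?inE ?blkB.
have dvd_suborbit x y : y != x -> k.+1 %| #|orbit 'P ('C_G[x | 'P])%g y|.
  have /card_gt0P[B] : 0 < #|blocks_through blocks x| by rewrite card_blocks muln_gt0.
  by rewrite inE => /andP[blkB xB] yx; rewrite (suborbit_meet x y yx B) ?dvdn_mulr.
have trG : [transitive G, on [set: T] | 'P].
  exact: atrans_flag_transitive design flag_tr lambda_gt0 (ltnW (ltn_trans k_gt1 k_ltT)).
split=> //; first exact: primitive_of_suborbit_dvdn (ltnW k_gt1) cardT trG _.
move=> x; rewrite /large -(card_orbit_stab 'P G x) (atransP trG) ?inE // cardsT cardT.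
apply: sq_mul_lt_cube; apply: leq_trans _ (card_blocks_through_le_astab1 flag_tr x).
by rewrite card_blocks leq_pmulr.
Qed.
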